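(* Let $\Lambda\subset\mathbb{R}^d$ be the closure of an open connected set with piecewise smooth boundary, let $F:\mathbb{R}^d\to\mathbb{R}^d$ and $v:\Lambda\to\mathbb{R}^d$ be such that for each $x\in\Lambda$ the problem $$\frac{d^2y(t,x)}{dt^2}=F(y(t,x)),\quad y(0,x)=x,\quad\frac{dy(0,x)}{dt}=v(x)$$ has a unique solution for all $t\in[0,\infty)$. Assume that $(F(y)-F(x),y-x)\ge0$ for all $x,y\in\mathbb{R}^d$ and $(v(x_2)-v(x_1),x_2-x_1)\ge0$ for all $x_1,x_2\in\Lambda$. Then there are no collisions on $[0,\infty)$: $y(t,x_1)\ne y(t,x_2)$ for all $t\ge0$ and all $x_1\ne x_2$ in $\Lambda$.
   Context: $(\cdot,\cdot)$ is the standard Euclidean inner product on $\mathbb{R}^d$. Each point of $\Lambda$ is a non-interacting point particle with initial position $x$ and initial velocity $v(x)$. *)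

From HB Require Import structures.
From mathcomp Require Import all_boot all_order all_algebra.
From mathcomp Require Import all_classical all_reals all_analysis.
Set Implicit Arguments. Unset Strict Implicit. Unset Printing Implicit Defensive.
Import Order.TTheory GRing.Theory Num.Theory.
Import numFieldNormedType.Exports.
Local Open Scope classical_set_scope.
Local Open Scope ring_scope.

Definition dot (R : realType) (d : nat) (u w : 'rV[R]_d) : R :=
  \sum_(i < d) u ord0 i * w ord0 i.

(* f' is the derivative of f on [0, +oo): for every t >= 0, the difference
   quotient h^-1 (f (t + h) - f t) tends to f' t as h -> 0, h <> 0, with
   t + h >= 0 (so at t = 0 this is the right derivative). *)
Definition deriv_nonneg (R : realType) (d : nat) (f f' : R -> 'rV[R]_d) : Prop :=
  forall t : R, 0 <= t ->
    (fun h : R => h^-1 *: (f (t + h) - f t))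
      @ within [set h : R | 0 <= t + h] (0 : R)^' --> f' t.

Definition is_solution (R : realType) (d : nat) (F : 'rV[R]_d -> 'rV[R]_d)
  (x0 v0 : 'rV[R]_d) (y : R -> 'rV[R]_d) : Prop :=
  y 0 = x0 /\
  exists y' : R -> 'rV[R]_d,
    [/\ deriv_nonneg y y', deriv_nonneg y' (F \o y) & y' 0 = v0].

(* Put w := y x2 - y x1.  The derivative of (w, w') is |w'|^2 + (w, F (y x2) - F (y x1)),
   which is nonnegative by the monotonicity of F, and (w, w') is nonnegative at t = 0 by
   the monotonicity of v; so (w, w') >= 0 on [0, +oo).  Hence |w|^2, whose derivative is
   2 (w, w'), is nondecreasing, and |w t|^2 >= |x2 - x1|^2 > 0. *)
From HB Require Import structures.
From mathcomp Require Import all_boot all_order all_algebra.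
From mathcomp Require Import all_classical all_reals all_analysis.
Import Order.TTheory GRing.Theory Num.Theory.
Import numFieldNormedType.Exports.
Local Open Scope classical_set_scope.
Local Open Scope ring_scope.

Section HalfLineDerivative.
Context {R : realType}.

Lemma at_right_le_within_half_line {t : R} : 0 <= t ->
  (0 : R)^'+ `=>` within [set h : R | 0 <= t + h] (0 : R)^'.
Proof.
move=> t_ge0 P near0P.
have {}near0P : \forall h \near (0 : R), h != 0 -> 0 <= t + h -> P h := near0P.
change (\forall h \near (0 : R), 0 < h -> P h); apply: filterS near0P.
by move=> h Ph h_gt0; apply: Ph; [rewrite gt_eqF | rewrite addr_ge0 // ltW].
Qed.

Lemma dnbhs_le_within_half_line {t : R} : 0 < t ->
  (0 : R)^' `=>` within [set h : R | 0 <= t + h] (0 : R)^'.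
Proof.
move=> t_gt0 P near0P.
have {}near0P : \forall h \near (0 : R), h != 0 -> 0 <= t + h -> P h := near0P.
change (\forall h \near (0 : R), h != 0 -> P h).
have near0_ge : \forall h \near (0 : R), 0 <= t + h.
  apply/nbhs_ballP; exists t => //= h; rewrite /ball /= sub0r normrN.
  by rewrite ltr_norml => /andP[/ltW tNh _]; rewrite -lerBlDl sub0r.
by apply: filterS2 near0_ge near0P => h th Ph h_neq0; apply: Ph.
Qed.

Context {V : normedModType R}.

(* [deriv_nonneg] is the instance [V := 'rV[R]_d]. *)
Definition half_line_deriv (f f' : R -> V) : Prop :=
  forall t : R, 0 <= t ->
    (fun h : R => h^-1 *: (f (t + h) - f t))
      @ within [set h : R | 0 <= t + h] (0 : R)^' --> f' t.

Lemma half_line_deriv_cvg {f f' : R -> V} : half_line_deriv f f' ->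
  forall t, 0 <= t ->
  (fun h => f (t + h)) @ within [set h : R | 0 <= t + h] (0 : R)^' --> f t.
Proof.
move=> df t t_ge0.
have -> : (fun h => f (t + h)) = (fun h => h *: (h^-1 *: (f (t + h) - f t)) + f t).
  apply: funext => h; have [->|h_neq0] := eqVneq h 0; first by rewrite addr0 scale0r add0r.
  by rewrite scalerA mulfV // scale1r subrK.
rewrite -[X in _ --> X]add0r -(scale0r (f' t)).
apply: cvgD (cvg_cst _); apply: cvgZ (df t t_ge0).
by apply: cvg_within_filter; apply: cvg_within_filter; exact: cvg_id.
Qed.

Lemma half_line_derivB {f f' g g' : R -> V} :
  half_line_deriv f f' -> half_line_deriv g g' ->
  half_line_deriv (fun s => f s - g s) (fun s => f' s - g' s).
Proof.
move=> df dg t t_ge0.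
have diffB h : f (t + h) - g (t + h) - (f t - g t) = f (t + h) - f t - (g (t + h) - g t).
  by rewrite !opprB addrACA [RHS]addrACA (addrC (- f t)).
under eq_fun do rewrite diffB scalerBr.
exact: cvgB (df t t_ge0) (dg t t_ge0).
Qed.

End HalfLineDerivative.

Lemma half_line_deriv_ge0_ndecr {R : realType} {g g' : R -> R} :
  half_line_deriv g g' -> (forall t, 0 <= t -> 0 <= g' t) ->
  forall a b, 0 <= a -> a <= b -> g a <= g b.
Proof.
move=> dg g'_ge0 a b a_ge0 ab.
have dg_open x : 0 < x ->
    (fun h : R => h^-1 *: ((g \o shift x) (h *: 1) - g x)) @ (0 : R)^' --> g' x.
  move=> x_gt0; under eq_fun do rewrite /= [_%:A]mulr1 (addrC _ x).
  exact: cvg_trans (cvg_app _ (dnbhs_le_within_half_line x_gt0)) (dg x (ltW x_gt0)).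
have g_derivable x : 0 < x -> derivable g x 1.
  by move=> x_gt0; apply/cvg_ex; exists (g' x); exact: dg_open.
apply: (@ger0_derive1_ndecry R g 0) => // [x|x|].
- by rewrite in_itv /= andbT; exact: g_derivable.
- rewrite in_itv /= andbT => x_gt0; rewrite derive1E /derive (cvg_lim _ (dg_open x x_gt0)) //.
  exact/g'_ge0/ltW.
apply/continuous_within_itvcyP; split => [x|].
  rewrite in_itv /= andbT => x_gt0.
  exact/differentiable_continuous/derivable1_diffP/g_derivable.
have := cvg_trans (cvg_app _ (at_right_le_within_half_line (lexx 0)))
  (half_line_deriv_cvg dg 0 (lexx 0)).
by under eq_fun do rewrite add0r.
Qed.

Lemma cvg_sumr {R : numFieldType} {T : Type} (F : set_system T) {FF : Filter F}
    (I : Type) (s : seq I) (f : I -> T -> R) (l : I -> R) :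
  (forall i, f i @ F --> l i) ->
  (fun x => \sum_(i <- s) f i x) @ F --> \sum_(i <- s) l i.
Proof.
move=> fl; elim: s => [|i s IHs].
  by rewrite big_nil; under eq_fun do rewrite big_nil; exact: cvg_cst.
by rewrite big_cons; under eq_fun do rewrite big_cons; exact: cvgD.
Qed.

Section DotProduct.
Context {R : realType} {d : nat}.
Implicit Types u w : 'rV[R]_d.

Lemma dotC u w : dot u w = dot w u.
Proof. by apply: eq_bigr => i _; rewrite mulrC. Qed.

Lemma dotBl u1 u2 w : dot (u1 - u2) w = dot u1 w - dot u2 w.
Proof.
by rewrite /dot -sumrB; apply: eq_bigr => i _; rewrite !mxE mulrBl.
Qed.

Lemma dotBr u w1 w2 : dot u (w1 - w2) = dot u w1 - dot u w2.
Proof. by rewrite dotC dotBl !(dotC u). Qed.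

Lemma dotZl (a : R) u w : dot (a *: u) w = a * dot u w.
Proof. by rewrite /dot mulr_sumr; apply: eq_bigr => i _; rewrite mxE mulrA. Qed.

Lemma dotZr (a : R) u w : dot u (a *: w) = a * dot u w.
Proof. by rewrite dotC dotZl dotC. Qed.

Lemma dot0l w : dot 0 w = 0.
Proof. by apply: big1 => i _; rewrite mxE mul0r. Qed.

Lemma dot_self_ge0 u : 0 <= dot u u.
Proof. by apply: sumr_ge0 => i _; rewrite -expr2 sqr_ge0. Qed.

Lemma dot_self_gt0 u : (0 < dot u u) = (u != 0).
Proof.
rewrite lt_def dot_self_ge0 andbT; congr negb; apply/eqP/eqP => [uu0|->].
  apply/rowP => i; rewrite mxE; apply/eqP; rewrite -sqrf_eq0 expr2; apply/eqP.
  by apply: (psumr_eq0P _ uu0) => // j _; rewrite -expr2 sqr_ge0.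
exact: dot0l.
Qed.

Lemma cvg_dot {T : Type} {F : set_system T} {FF : Filter F}
    (a b : T -> 'rV[R]_d) u w :
  a @ F --> u -> b @ F --> w -> (fun x => dot (a x) (b x)) @ F --> dot u w.
Proof.
move=> au bw; apply: cvg_sumr => i.
have entry_cvg (c : T -> 'rV[R]_d) (z : 'rV[R]_d) :
    c @ F --> z -> (fun x => c x ord0 i) @ F --> z ord0 i.
  exact: (continuous_cvg _ (@coord_continuous R 1 d ord0 i z)).
exact: cvgM (entry_cvg _ _ au) (entry_cvg _ _ bw).
Qed.

Lemma half_line_deriv_dot {f f' g g' : R -> 'rV[R]_d} :
  half_line_deriv f f' -> half_line_deriv g g' ->
  half_line_deriv (fun t => dot (f t) (g t))
    (fun t => dot (f' t) (g t) + dot (f t) (g' t)).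
Proof.
move=> df dg t t_ge0.
have -> : (fun h => h^-1 *: (dot (f (t + h)) (g (t + h)) - dot (f t) (g t))) =
  (fun h => dot (h^-1 *: (f (t + h) - f t)) (g (t + h)) +
            dot (f t) (h^-1 *: (g (t + h) - g t))).
  by apply: funext => h; rewrite dotZl dotZr -mulrDr dotBl dotBr addrA subrK.
apply: cvgD; last exact: cvg_dot (cvg_cst _) (dg t t_ge0).
exact: cvg_dot (df t t_ge0) (half_line_deriv_cvg dg t t_ge0).
Qed.

Lemma dot_self_ge_initial {w w' w'' : R -> 'rV[R]_d} :
  half_line_deriv w w' -> half_line_deriv w' w'' ->
  (forall t, 0 <= t -> 0 <= dot (w t) (w'' t)) -> 0 <= dot (w 0) (w' 0) ->
  forall t, 0 <= t -> dot (w 0) (w 0) <= dot (w t) (w t).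
Proof.
move=> dw dw' ww''_ge0 ww'0_ge0.
have ww'_ge0 t : 0 <= t -> 0 <= dot (w t) (w' t).
  move=> t_ge0; apply: le_trans ww'0_ge0 _.
  apply: (half_line_deriv_ge0_ndecr (half_line_deriv_dot dw dw')) => // s s_ge0.
  by rewrite addr_ge0 ?dot_self_ge0 ?ww''_ge0.
move=> t t_ge0; apply: (half_line_deriv_ge0_ndecr (half_line_deriv_dot dw dw)) => //.
by move=> s s_ge0; rewrite [dot (w' s) _]dotC addr_ge0 ?ww'_ge0.
Qed.

End DotProduct.

Theorem theorem4 (R : realType) (d : nat) (Lam : set 'rV[R]_d)
  (F : 'rV[R]_d -> 'rV[R]_d) (v : 'rV[R]_d -> 'rV[R]_d)
  (y : 'rV[R]_d -> R -> 'rV[R]_d) :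
  (exists U : set 'rV[R]_d, [/\ open U, connected U & Lam = closure U]) ->
  (forall x, Lam x ->
     is_solution F x (v x) (y x) /\
     (forall z, is_solution F x (v x) z -> forall t, 0 <= t -> z t = y x t)) ->
  (forall a b : 'rV[R]_d, 0 <= dot (F b - F a) (b - a)) ->
  (forall x1 x2, Lam x1 -> Lam x2 -> 0 <= dot (v x2 - v x1) (x2 - x1)) ->
  forall (t : R) (x1 x2 : 'rV[R]_d), 0 <= t -> Lam x1 -> Lam x2 -> x1 != x2 ->
    y x1 t != y x2 t.
Proof.
move=> _ sol F_mono v_mono t x1 x2 t_ge0 Lx1 Lx2 x12.
have [[y1_0 [y1' [dy1 dy1' y1'_0]]] _] := sol x1 Lx1.
have [[y2_0 [y2' [dy2 dy2' y2'_0]]] _] := sol x2 Lx2.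
have accel_ge0 s : 0 <= s -> 0 <= dot (y x2 s - y x1 s) (F (y x2 s) - F (y x1 s)).
  by move=> _; rewrite dotC; exact: F_mono.
have vel0_ge0 : 0 <= dot (y x2 0 - y x1 0) (y2' 0 - y1' 0).
  by rewrite y1_0 y2_0 y1'_0 y2'_0 dotC; exact: v_mono.
have := dot_self_ge_initial (half_line_derivB dy2 dy1) (half_line_derivB dy2' dy1')
  accel_ge0 vel0_ge0 t t_ge0.
rewrite y1_0 y2_0; apply: contraTneq => ->.
by rewrite subrr dot0l -ltNge dot_self_gt0 subr_eq0 eq_sym.
Qed.
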